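(* Let $z\in Z_0$. The element $\tilde z(z)=(\tilde\rho,\tilde v,\tilde m,\tilde\sigma,\tilde p)\in Z$ defined by $\tilde\rho:=1$, $\tilde v:=\frac{m-\rho v}{1-\rho^2}$, $\tilde m:=v-\rho\tilde v$, and $\tilde\sigma+\tilde p\,\mathrm{Id}:=\tilde m\otimes\tilde v+\tilde v\otimes\tilde m$ (i.e. $\tilde\sigma$ is the trace-free part and $\tilde p$ is $\frac1n$ times the trace of the right-hand side) belongs to $\Lambda$, and for every $t\in(-1-\rho,1-\rho)$ there holds $\tilde z(z+t\tilde z(z))=\tilde z(z)$, $T_\pm(z+t\tilde z(z))=T_\pm(z)$, and $M(z+t\tilde z(z))^\circ=M(z)^\circ$.
   Context: Let $n\ge2$, $\mathcal S_0^{n\times n}$ the trace-free symmetric matrices, $Z:=\mathbb{R}\times\mathbb{R}^n\times\mathbb{R}^n\times\mathcal S_0^{n\times n}\times\mathbb{R}$ with elements $z=(\rho,v,m,\sigma,p)$, $Z_0:=\{z:\rho\in(-1,1)\}$. For $z\in Z_0$: $M(z)=\frac{v\otimes v-\rho(m\otimes v+v\otimes m)+m\otimes m}{1-\rho^2}-\sigma$, $T_\pm(z)=\frac{|m\pm v|^2}{n(\rho\pm1)^2}$; for a symmetric matrix $S$, $S^\circ:=S-\frac1n\mathrm{tr}(S)\mathrm{Id}$. Wave cone: $M_\Lambda(\bar z):=\begin{pmatrix}\bar\sigma+\bar p\,\mathrm{Id}&\bar v\\ \bar v^T&0\\ \bar m^T&\bar\rho\end{pmatrix}$, $\Lambda:=\{\bar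 z\in Z:\ker M_\Lambda(\bar z)\ne\{0\},(\bar\rho,\bar v)\ne0\}$. *)

(* Vectors of R^n are column vectors 'cV[R]_n,
   v \otimes w := v *m w^T. *)
From mathcomp Require Import all_boot all_order all_algebra.
Set Implicit Arguments. Unset Strict Implicit. Unset Printing Implicit Defensive.
Import Order.TTheory GRing.Theory Num.Theory.
Local Open Scope ring_scope.

Section Defs.
Variables (R : realFieldType) (n : nat).

Record Zel := mkZ { zrho : R; zv : 'cV[R]_n; zm : 'cV[R]_n;
                    zsigma : 'M[R]_n; zp : R }.

Definition inZ (z : Zel) : Prop :=
  (zsigma z)^T = zsigma z /\ \tr (zsigma z) = 0.

Definition inZ0 (z : Zel) : Prop := inZ z /\ -1 < zrho z < 1.

Definition tens (a b : 'cV[R]_n) : 'M[R]_n := a *m b^T.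

Definition sqnorm (a : 'cV[R]_n) : R := \sum_i a i 0 ^+ 2.

Definition zadd (z w : Zel) : Zel :=
  mkZ (zrho z + zrho w) (zv z + zv w) (zm z + zm w)
      (zsigma z + zsigma w) (zp z + zp w).

Definition zscale (t : R) (z : Zel) : Zel :=
  mkZ (t * zrho z) (t *: zv z) (t *: zm z) (t *: zsigma z) (t * zp z).

Definition Mfun (z : Zel) : 'M[R]_n :=
  (1 - zrho z ^+ 2)^-1 *:
    (tens (zv z) (zv z) - zrho z *: (tens (zm z) (zv z) + tens (zv z) (zm z))
     + tens (zm z) (zm z)) - zsigma z.

Definition Tplus (z : Zel) : R :=
  sqnorm (zm z + zv z) / (n%:R * (zrho z + 1) ^+ 2).
Definition Tminus (z : Zel) : R :=
  sqnorm (zm z - zv z) / (n%:R * (zrho z - 1) ^+ 2).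

Definition tfree (S : 'M[R]_n) : 'M[R]_n := S - (n%:R^-1 * \tr S)%:M.

Definition MLambda (z : Zel) : 'M[R]_(n + 1 + 1, n + 1) :=
  col_mx (col_mx (row_mx (zsigma z + (zp z)%:M) (zv z))
                 (row_mx (zv z)^T (0 : 'M[R]_1)))
         (row_mx (zm z)^T ((zrho z)%:M : 'M[R]_1)).

Definition inLambda (z : Zel) : Prop :=
  inZ z /\
  (exists x : 'cV[R]_(n + 1), x != 0 /\ MLambda z *m x = 0) /\
  (zrho z != 0 \/ zv z != 0).

Definition ztilde (z : Zel) : Zel :=
  let vt := (1 - zrho z ^+ 2)^-1 *: (zm z - zrho z *: zv z) in
  let mt := zv z - zrho z *: vt in
  let S := tens mt vt + tens vt mt in
  mkZ 1 vt mt (tfree S) (n%:R^-1 * \tr S).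

End Defs.

From mathcomp Require Import all_boot all_order all_algebra.
From mathcomp Require Import ring lra.
Set Implicit Arguments. Unset Strict Implicit.
Import Order.TTheory GRing.Theory Num.Theory.
Local Open Scope ring_scope.

(* When 1 - rho^2 != 0, the vector parts (vt, mt) of ztilde z are the unique
   coordinates with v = mt + rho vt and m = vt + rho mt.  Moving along ztilde z
   changes rho but not these coordinates, so ztilde is unchanged, and
   T_+/- = |mt +/- vt|^2 / n does not move.  In coordinates
   M(z) = mt⊗mt + vt⊗vt + rho S - sigma with S = mt⊗vt + vt⊗mt, so the step adds
   t (S - S°), a multiple of Id.  Finally ztilde z lies in the wave cone: for
   y ⊥ vt, which exists as n >= 2, (y, -mt.y) is in the kernel of M_Lambda
   because S y = (mt.y) vt. *)

Lemma exists_cV_orthogonal (F : fieldType) (n : nat) (b : 'cV[F]_n) :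
  (1 < n)%N -> exists2 y : 'cV[F]_n, y != 0 & b^T *m y = 0.
Proof.
move=> n_gt1; have : kermx b != 0.
  by rewrite kermx_eq0 /row_free ltn_eqF // (leq_ltn_trans (rank_leq_col b)).
case/rowV0Pn => u /sub_kermxP u_ker u_neq0.
by exists u^T; rewrite ?trmx_eq0 // -trmx_mul u_ker trmx0.
Qed.

Section Wave.
Variables (R : realFieldType) (n : nat).
Implicit Types (z : Zel R n) (a b : 'cV[R]_n) (X : 'M[R]_n) (r t : R).

Lemma sub1_sqr_neq0 r : 1 - r ^+ 2 != 0 -> (r + 1 != 0) && (r - 1 != 0).
Proof.
have -> : 1 - r ^+ 2 = - ((r + 1) * (r - 1)) by ring.
by rewrite oppr_eq0 mulf_eq0 negb_or.
Qed.

Lemma sub1_sqr_gt0 r : -1 < r < 1 -> 0 < 1 - r ^+ 2.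
Proof.
case/andP => r_gt r_lt; have -> : 1 - r ^+ 2 = (1 - r) * (1 + r) by ring.
by apply: mulr_gt0; lra.
Qed.

Lemma sqnormZ r a : sqnorm (r *: a) = r ^+ 2 * sqnorm a.
Proof. by rewrite /sqnorm mulr_sumr; apply: eq_bigr => i _; rewrite mxE exprMn. Qed.

Lemma tensE a b i j : tens a b i j = a i 0 * b j 0.
Proof. by rewrite !mxE big_ord1 !mxE. Qed.

Lemma trmx_tens a b : (tens a b)^T = tens b a.
Proof. by rewrite /tens trmx_mul trmxK. Qed.

Definition symtens a b := tens a b + tens b a.

Lemma trmx_symtens a b : (symtens a b)^T = symtens a b.
Proof. by rewrite linearD /= !trmx_tens addrC. Qed.

Lemma symtens_mulmx a b (y : 'cV[R]_n) : b^T *m y = 0 -> symtens a b *m y = b *m (a^T *m y).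
Proof. by move=> by0; rewrite mulmxDl -!mulmxA by0 mulmx0 add0r. Qed.

Lemma tfree_add_scalar X r : tfree (X + r%:M) = tfree X.
Proof.
case: n X => [|k] X; first by rewrite [LHS]flatmx0 [RHS]flatmx0.
have k1_neq0 : k.+1%:R != 0 :> R by rewrite pnatr_eq0.
rewrite /tfree mxtraceD mxtrace_scalar mulrDr -[r *+ _]mulr_natl mulKf //.
by rewrite raddfD /= opprD addrACA subrr addr0.
Qed.

Lemma mxtrace_tfree X : \tr (tfree X) = 0.
Proof.
case: n X => [|k] X; first by rewrite [tfree X]flatmx0 linear0.
have k1_neq0 : k.+1%:R != 0 :> R by rewrite pnatr_eq0.
by rewrite /tfree linearB /= mxtrace_scalar -[_ *+ _]mulr_natl mulVKf // subrr.
Qed.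

Lemma trmx_tfree X : (tfree X)^T = tfree X^T.
Proof. by rewrite /tfree linearB /= tr_scalar_mx mxtrace_tr. Qed.

Definition ztilde_of b a : Zel R n :=
  let S := symtens a b in mkZ 1 b a (tfree S) (n%:R^-1 * \tr S).

Lemma ztildeE z : ztilde z = ztilde_of (zv (ztilde z)) (zm (ztilde z)).
Proof. by []. Qed.

Lemma ztilde_of_inLambda b a : (1 < n)%N -> inLambda (ztilde_of b a).
Proof.
move=> n_gt1; split; [split|split].
- by rewrite /= trmx_tfree trmx_symtens.
- exact: mxtrace_tfree.
- have [y y_neq0 by0] := exists_cV_orthogonal b n_gt1.
  exists (col_mx y (- (a^T *m y))); split; first by rewrite col_mx_eq0 negb_and y_neq0.
  rewrite /MLambda /= !mul_col_mx !mul_row_col /tfree subrK symtens_mulmx //.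
  by rewrite by0 mulmxN subrr mul0mx addr0 mul1mx subrr !col_mx0.
- by left; exact: oner_neq0.
Qed.

Definition has_coords z a b := zv z = a + zrho z *: b /\ zm z = b + zrho z *: a.

Lemma has_coords_ztilde z :
  1 - zrho z ^+ 2 != 0 -> has_coords z (zm (ztilde z)) (zv (ztilde z)).
Proof. by move=> z_reg; split; apply/matrixP => i j; rewrite !mxE; field. Qed.

Lemma ztilde_coordsE z a b : 1 - zrho z ^+ 2 != 0 -> has_coords z a b ->
  zv (ztilde z) = b /\ zm (ztilde z) = a.
Proof.
by move=> z_reg [v_eq m_eq]; rewrite /= v_eq m_eq; split;
  apply/matrixP => i j; rewrite !mxE; field.
Qed.

Lemma has_coords_translate z a b t :
  has_coords z a b -> has_coords (zadd z (zscale t (ztilde_of b a))) a b.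
Proof.
by move=> [v_eq m_eq]; rewrite /has_coords /= v_eq m_eq mulr1; split;
  apply/matrixP => i j; rewrite !mxE; ring.
Qed.

Lemma ztilde_translate z t : 1 - zrho z ^+ 2 != 0 -> 1 - (zrho z + t) ^+ 2 != 0 ->
  ztilde (zadd z (zscale t (ztilde z))) = ztilde z.
Proof.
move=> z_reg w_reg; have := has_coords_translate t (has_coords_ztilde z_reg).
rewrite -ztildeE => /ztilde_coordsE [|v_eq m_eq]; first by rewrite /= mulr1.
by rewrite ztildeE v_eq m_eq [RHS]ztildeE.
Qed.

Lemma sqnormZ_div r a k : r != 0 -> sqnorm (r *: a) / (k * r ^+ 2) = sqnorm a / k.
Proof.
move=> r_neq0; rewrite sqnormZ [k * _]mulrC invfM mulrACA mulfV ?mul1r //.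
exact: expf_neq0.
Qed.

Lemma Tplus_ztilde z : 1 - zrho z ^+ 2 != 0 ->
  Tplus z = sqnorm (zm (ztilde z) + zv (ztilde z)) / n%:R.
Proof.
move=> z_reg; have [v_eq m_eq] := has_coords_ztilde z_reg.
have mv_eq : zm z + zv z = (zrho z + 1) *: (zm (ztilde z) + zv (ztilde z)).
  by rewrite {1}v_eq m_eq; apply/matrixP => i j; rewrite !mxE; ring.
by rewrite /Tplus mv_eq sqnormZ_div //; case/andP: (sub1_sqr_neq0 z_reg).
Qed.

Lemma Tminus_ztilde z : 1 - zrho z ^+ 2 != 0 ->
  Tminus z = sqnorm (zm (ztilde z) - zv (ztilde z)) / n%:R.
Proof.
move=> z_reg; have [v_eq m_eq] := has_coords_ztilde z_reg.
have mv_eq : zm z - zv z = (zrho z - 1) *: (zm (ztilde z) - zv (ztilde z)).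
  by rewrite {1}v_eq m_eq; apply/matrixP => i j; rewrite !mxE; ring.
by rewrite /Tminus mv_eq sqnormZ_div //; case/andP: (sub1_sqr_neq0 z_reg).
Qed.

Lemma tens_coords r a b : let v := a + r *: b in let m := b + r *: a in
  tens v v - r *: (tens m v + tens v m) + tens m m =
  (1 - r ^+ 2) *: (tens a a + tens b b + r *: symtens a b).
Proof. by apply/matrixP => i j; rewrite !(tensE, mxE); ring. Qed.

Lemma Mfun_coords z a b : 1 - zrho z ^+ 2 != 0 -> has_coords z a b ->
  Mfun z = tens a a + tens b b + zrho z *: symtens a b - zsigma z.
Proof.
by move=> z_reg [v_eq m_eq]; rewrite /Mfun v_eq m_eq tens_coords scalerA mulVf ?scale1r.
Qed.

Lemma Mfun_translate z a b t :
  1 - zrho z ^+ 2 != 0 -> 1 - (zrho z + t) ^+ 2 != 0 -> has_coords z a b ->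
  Mfun (zadd z (zscale t (ztilde_of b a))) = Mfun z + (t * zp (ztilde_of b a))%:M.
Proof.
move=> z_reg w_reg cz; set w := zadd z _.
have w_reg' : 1 - zrho w ^+ 2 != 0 by rewrite /= mulr1.
rewrite (Mfun_coords w_reg' (has_coords_translate t cz)) (Mfun_coords z_reg cz).
rewrite /= mulr1 /tfree.
rewrite -!scale_scalar_mx; set Q := _ + tens b b; set S := symtens a b.
set C := (\tr S)%:M; clearbody Q S C.
by apply/matrixP => i j; rewrite !mxE; ring.
Qed.

End Wave.

Theorem lemma3p9 (R : realFieldType) (n : nat) (hn : (2 <= n)%N)
  (z : Zel R n) (hz : inZ0 z) :
  inLambda (ztilde z) /\
  forall t : R, -1 - zrho z < t < 1 - zrho z ->
    let w := zadd z (zscale t (ztilde z)) in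
    [/\ ztilde w = ztilde z,
        Tplus w = Tplus z, Tminus w = Tminus z &
        tfree (Mfun w) = tfree (Mfun z)].
Proof.
case: hz => _ /andP[rho_gt rho_lt].
have z_reg : 1 - zrho z ^+ 2 != 0 by rewrite lt0r_neq0 ?sub1_sqr_gt0 ?rho_gt.
split; first by rewrite ztildeE; exact: ztilde_of_inLambda.
move=> t /andP[t_gt t_lt] w.
have w_reg : 1 - (zrho z + t) ^+ 2 != 0.
  by rewrite lt0r_neq0 // sub1_sqr_gt0 //; apply/andP; split; lra.
have w_tilde : ztilde w = ztilde z by exact: ztilde_translate.
have w_reg' : 1 - zrho w ^+ 2 != 0 by rewrite /w /= mulr1.
split.
- exact: w_tilde.
- by rewrite (Tplus_ztilde w_reg') (Tplus_ztilde z_reg) w_tilde.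
- by rewrite (Tminus_ztilde w_reg') (Tminus_ztilde z_reg) w_tilde.
- rewrite /w ztildeE (Mfun_translate z_reg w_reg (has_coords_ztilde z_reg)).
  exact: tfree_add_scalar.
Qed.
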